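(* Let $d\ge3$, $h\ge1$, $1\le n\le h$, and let $j$ be a vertex at distance $n$ from the root, with parent $p(j)$. Then in $G(d,h)$, $$\theta(d,h+2-n)\,\bar{\mathbf{x}}_j-\theta(d,h+1-n)\,\bar{\mathbf{x}}_{p(j)}=0,$$ where $\theta(d,m):=\frac{(d-1)^m-1}{d-2}$.
   Context: Let $\mathcal{T}(d,h)$ be the rooted tree in which the root $0$ has $d$ children, every vertex at distance $1,\dots,h-1$ from the root has $d-1$ children, and the vertices at distance $h$ are leaves. Let $V$ be its vertex set, $A$ its adjacency matrix, $\Delta := dI-A$, and $\Lambda\subset\mathbb{Z}^V$ the lattice spanned by the rows of $\Delta$. Then $G(d,h):=\mathbb{Z}^V/\Lambda$; $\{\mathbf{x}_i:i\in V\}$ is the standard basis of $\mathbb{Z}^V$ and $\bar{\mathbf{v}}$ denotes the image of $\mathbf{v}$ in $G(d,h)$. *)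

From HB Require Import structures.
From mathcomp Require Import all_boot all_order all_algebra.
Set Implicit Arguments. Unset Strict Implicit. Unset Printing Implicit Defensive.
Import Order.TTheory GRing.Theory Num.Theory.

(* A vertex of T(d,h) at depth k (0 <= k <= h) is encoded by the path of
   child indices from the root: (k, t) with t : h.-tuple 'I_d, where
   t_0 < d (root has d children), t_i < d-1 for 1 <= i < k (other internal
   vertices have d-1 children), and t_i = 0 for i >= k (padding, so the
   encoding is unique). *)
Definition vtx_ok (d h : nat) (v : 'I_h.+1 * h.-tuple 'I_d) : bool :=
  [forall i : 'I_h,
     if (i < v.1)%N then ((0 < i)%N ==> (val (tnth v.2 i) < d.-1)%N)
     else val (tnth v.2 i) == 0%N].

Definition vertex (d h : nat) := {v : 'I_h.+1 * h.-tuple 'I_d | @vtx_ok d h v}.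

Definition depth d h (v : vertex d h) : nat := val (val v).1.

Definition is_parent d h (u w : vertex d h) : bool :=
  (depth w == (depth u).+1) &&
  [forall i : 'I_h, (i < depth u)%N ==> (tnth (val u).2 i == tnth (val w).2 i)].

Definition adj d h (u w : vertex d h) : bool := is_parent u w || is_parent w u.

Definition Delta d h (u w : vertex d h) : int :=
  ((Posz d) * Posz (u == w : nat) - Posz (adj u w : nat))%R.

(* x : Z^V lies in the lattice Lambda spanned by the rows of Delta,
   i.e. its image in G(d,h) = Z^V / Lambda is zero. *)
Definition in_lattice d h (x : vertex d h -> int) : Prop :=
  exists c : vertex d h -> int,
    forall v, x v = (\sum_(u : vertex d h) c u * Delta u v)%R.

Definition xb d h (i : vertex d h) : vertex d h -> int :=
  fun v => Posz (v == i : nat).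

(* theta(d,m) = ((d-1)^m - 1)/(d-2)  (exact division for d >= 3) *)
Definition theta (d m : nat) : nat := ((d.-1 ^ m - 1) %/ (d - 2))%N.

From mathcomp Require Import all_boot all_order all_algebra.
From mathcomp Require Import zify ring.
Import GRing.Theory.

Set Implicit Arguments.
Unset Strict Implicit.
Unset Printing Implicit Defensive.

(* Write R_k(j, p) for theta(k+1) x_j - theta(k) x_p.  The row of Delta at a
   non-root vertex j is d x_j - x_{p(j)} - sum_w x_w, w ranging over the d-1
   children of j.  Since theta(k+2) + (d-1) theta(k) = d theta(k+1), adding
   theta(k+1) times this row to the sum of the R_k(w, j) gives R_{k+1}(j, p(j)).
   So R_{k+1}(j, p(j)) lies in the lattice by induction on the height
   k = h - depth j; at height 0, j is a leaf and theta(0) = 0. *)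

Lemma theta_geometric d m : (3 <= d)%N -> theta d m = (\sum_(i < m) d.-1 ^ i)%N.
Proof.
move=> hd; rewrite /theta subn1 predn_exp subn2 mulKn //.
by rewrite -subn2 subn_gt0.
Qed.

Lemma theta0 d : theta d 0 = 0%N.
Proof. by rewrite /theta expn0 subnn div0n. Qed.

Lemma thetaS d m : (3 <= d)%N -> theta d m.+1 = (1 + d.-1 * theta d m)%N.
Proof.
move=> hd; rewrite !theta_geometric // big_ord_recl big_distrr.
by congr (_ + _); apply: eq_bigr => i _; rewrite expnS.
Qed.

Lemma theta_rec d m : (3 <= d)%N ->
  (theta d m.+2 + d.-1 * theta d m = d * theta d m.+1)%N.
Proof.
move=> hd; rewrite (thetaS m.+1 hd) (thetaS m hd).
case: d hd => [//|q _] /=.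
by rewrite mulSn addnAC.
Qed.

Section Lattice.
Variables d h : nat.
Notation V := (vertex d h).

Lemma lattice_eq (f g : V -> int) : in_lattice f -> f =1 g -> in_lattice g.
Proof. by move=> [c hc] fg; exists c => v; rewrite -fg. Qed.

Lemma lattice_row (u : V) : in_lattice (Delta u).
Proof.
exists (xb u) => v; rewrite (bigD1 u) //= /xb eqxx mul1r big1 ?addr0 // => w.
by move=> /negbTE ->; rewrite mul0r.
Qed.

Lemma lattice0 : in_lattice (fun _ : V => 0%R).
Proof. by exists (fun _ => 0%R) => v; rewrite big1 // => u _; rewrite mul0r. Qed.

Lemma latticeD (f g : V -> int) :
  in_lattice f -> in_lattice g -> in_lattice (fun v => f v + g v)%R.
Proof.
move=> [c hc] [c' hc']; exists (fun u => c u + c' u)%R => v.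
by rewrite hc hc' -big_split; apply: eq_bigr => u _; rewrite mulrDl.
Qed.

Lemma latticeZ (a : int) (f : V -> int) :
  in_lattice f -> in_lattice (fun v => a * f v)%R.
Proof.
move=> [c hc]; exists (fun u => a * c u)%R => v.
by rewrite hc big_distrr /=; apply: eq_bigr => u _; rewrite mulrA.
Qed.

Lemma lattice_sum (I : Type) (r : seq I) (P : pred I) (F : I -> V -> int) :
  (forall i, P i -> in_lattice (F i)) ->
  in_lattice (fun v => \sum_(i <- r | P i) F i v)%R.
Proof.
move=> FP; elim: r => [|i r IHr].
  by apply: lattice_eq lattice0 _ => v; rewrite big_nil.
case Pi: (P i).
  by apply: lattice_eq (latticeD (FP i Pi) IHr) _ => v; rewrite big_cons Pi.
by apply: lattice_eq IHr _ => v; rewrite big_cons Pi.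
Qed.

End Lattice.

Section Tree.
Variables d h : nat.
Notation V := (vertex d h).

Definition children (j : V) : {set V} := [set w | is_parent j w].

Lemma vtx_okP (v : V) (i : 'I_h) :
  if (i < depth v)%N then (0 < i)%N ==> (tnth (val v).2 i < d.-1)%N
  else val (tnth (val v).2 i) == 0%N.
Proof. exact: (forallP (valP v)) i. Qed.

Lemma depth_le (v : V) : (depth v <= h)%N.
Proof. by rewrite -ltnS ltn_ord. Qed.

Lemma depth_parent (u w : V) : is_parent u w -> depth w = (depth u).+1.
Proof. by case/andP => /eqP. Qed.

Lemma vertex_eq (u w : V) : depth u = depth w ->
  (forall i : 'I_h, (i < depth u)%N -> tnth (val u).2 i = tnth (val w).2 i) ->
  u = w.
Proof.
move=> duw tuw; apply: val_inj.
rewrite [val u]surjective_pairing [val w]surjective_pairing; congr pair.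
  exact: val_inj.
apply: eq_from_tnth => i; case: (ltnP i (depth u)) => iu; first exact: tuw.
have := vtx_okP u i; have := vtx_okP w i; rewrite -duw ltnNge iu /=.
by move=> /eqP wi0 /eqP ui0; apply: ord_inj; rewrite ui0 wi0.
Qed.

Lemma parent_uniq (u u' j : V) : is_parent u j -> is_parent u' j -> u = u'.
Proof.
move=> /andP [/eqP ju /forallP uj] /andP [/eqP ju' /forallP u'j].
have duu' : depth u = depth u' by apply: succn_inj; rewrite -ju -ju'.
apply: vertex_eq => // i iu; have := uj i; have := u'j i; rewrite -duu' iu /=.
by move=> /eqP -> /eqP.
Qed.

Section Children.
Variable j : V.
Hypotheses (j_nonroot : (0 < depth j)%N) (j_inner : (depth j < h)%N).

Let k : 'I_h := Ordinal j_inner.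

Definition child_code (a : 'I_d.-1) : 'I_h.+1 * h.-tuple 'I_d :=
  (inord (depth j).+1,
   [tuple if i == k then widen_ord (leq_pred d) a else tnth (val j).2 i | i < h]).

Lemma child_code_ok a : vtx_ok (child_code a).
Proof.
apply/forallP => i /=; rewrite inordK ?ltnS // tnth_mktuple.
rewrite (_ : (i == k) = (val i == depth j)) //.
case: (ltngtP i (depth j)) (vtx_okP j i) => ij //=.
by rewrite ltn_ord implybT.
Qed.

Definition child a : V := exist (fun v => vtx_ok v) _ (child_code_ok a).

Lemma child_label a : tnth (val (child a)).2 k = widen_ord (leq_pred d) a.
Proof. by rewrite tnth_mktuple eqxx. Qed.

Lemma child_inj : injective child.
Proof.
move=> a b /(congr1 (fun w => val (tnth (val w).2 k))).
by rewrite !child_label => /= /ord_inj.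
Qed.

Lemma child_parent a : is_parent j (child a).
Proof.
apply/andP; split; first by rewrite /depth /= inordK // ltnS.
apply/forallP => i; apply/implyP => ij; rewrite tnth_mktuple.
by have -> : (i == k) = false by apply: ltn_eqF.
Qed.

Lemma children_imset : children j = [set child a | a : 'I_d.-1].
Proof.
apply/setP => w; rewrite inE; apply/idP/imsetP => [jw | [a _ ->]].
  have dw := depth_parent jw.
  have wk : (tnth (val w).2 k < d.-1)%N.
    by have := vtx_okP w k; rewrite dw /= ltnSn j_nonroot.
  exists (Ordinal wk) => //; apply: vertex_eq => [|i].
    by rewrite dw /depth /= inordK // ltnS.
  rewrite dw ltnS leq_eqVlt => /orP [ik | ij].
    have -> : i = k by apply: val_inj; apply/eqP.
    by rewrite child_label; apply: val_inj.
  rewrite tnth_mktuple (_ : i == k = false); last exact: ltn_eqF.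
  by case/andP: jw => _ /forallP /(_ i); rewrite ij => /eqP.
exact: child_parent.
Qed.

End Children.

Lemma card_children (j : V) : (0 < depth j)%N -> (depth j < h)%N ->
  #|children j| = d.-1.
Proof.
by move=> j0 jh; rewrite children_imset // card_imset ?card_ord //; apply: child_inj.
Qed.

Lemma sum_xb (A : {pred V}) v : (\sum_(w in A) xb w v)%R = Posz (v \in A).
Proof.
rewrite /xb; case: (boolP (v \in A)) => vA.
  rewrite (bigD1 v) //= eqxx big1 ?addr0 // => w /andP [_ wv].
  by rewrite eq_sym (negbTE wv).
by rewrite big1 // => w wA; case: eqP => // vw; move: vA; rewrite vw wA.
Qed.

Lemma Delta_row (j pj : V) v : is_parent pj j ->
  Delta j v = (Posz d * xb j v - xb pj v - \sum_(w in children j) xb w v)%R.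
Proof.
move=> pj_j; rewrite sum_xb inE /Delta /adj {1}/xb eq_sym.
have -> : is_parent v j = (v == pj).
  by apply/idP/eqP => [vj | ->] //; apply: parent_uniq vj pj_j.
rewrite /xb; case: (eqVneq v pj) => [->|_]; last by rewrite orbF subr0.
suff -> : is_parent j pj = false by rewrite subr0.
by apply/negbTE/negP => /depth_parent; rewrite (depth_parent pj_j); lia.
Qed.

End Tree.

Section Relations.
Variables d h : nat.
Hypothesis d_ge3 : (3 <= d)%N.
Notation V := (vertex d h).

Definition theta_relation (k : nat) (j p : V) : V -> int :=
  fun v => (Posz (theta d k.+1) * xb j v - Posz (theta d k) * xb p v)%R.

(* The counting hypothesis holds at inner vertices, which have [d-1] children,
   and at leaves, where [k = 0] and [theta d 0 = 0]. *)
Lemma theta_relation_step k (j pj : V) : is_parent pj j ->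
  (#|children j| * theta d k = d.-1 * theta d k)%N ->
  (forall w, w \in children j -> in_lattice (theta_relation k w j)) ->
  in_lattice (theta_relation k.+1 j pj).
Proof.
move=> pj_j card_theta rel_children.
apply: lattice_eq (latticeD (latticeZ (Posz (theta d k.+1)) (lattice_row j))
                           (lattice_sum (index_enum V) rel_children)) _ => v.
rewrite /theta_relation (Delta_row v pj_j) sumrB -big_distrr /= sumr_const -mulr_natr natz.
have coef : Posz (theta d k.+2) =
    (Posz d * Posz (theta d k.+1) - Posz (theta d k) * Posz #|children j|)%R.
  rewrite -!PoszM -(theta_rec k d_ge3) (mulnC (theta d k)) card_theta.
  by rewrite PoszD addrK.
rewrite coef; ring.
Qed.

Lemma theta_relation_in_lattice k (j pj : V) :
  (depth j + k = h)%N -> (0 < depth j)%N -> is_parent pj j ->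
  in_lattice (theta_relation k.+1 j pj).
Proof.
elim: k j pj => [|k IHk] j pj jk j0 pj_j; apply: theta_relation_step pj_j _ _.
- by rewrite theta0 !muln0.
- by move=> w; rewrite inE => /depth_parent; have := depth_le w; lia.
- by rewrite card_children //; lia.
- move=> w; rewrite inE => j_w; have w_depth := depth_parent j_w.
  by apply: IHk j_w; lia.
Qed.

End Relations.

Theorem lemma7p1 (d h n : nat) (hd : (3 <= d)%N) (hh : (1 <= h)%N)
  (hn1 : (1 <= n)%N) (hnh : (n <= h)%N) (j pj : vertex d h) :
  depth j = n -> is_parent pj j ->
  in_lattice (fun v => (Posz (theta d (h + 2 - n)) * xb j v
                        - Posz (theta d (h + 1 - n)) * xb pj v)%R).
Proof.
move=> jn pj_j.
have -> : (h + 2 - n = (h - n).+2)%N by lia.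
have -> : (h + 1 - n = (h - n).+1)%N by lia.
by apply: theta_relation_in_lattice pj_j; lia.
Qed.
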